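(* Let $\mathbb M=(V,d)$ be a binary structure and $A\subseteq V$. Then $A$ is a robust module of $\mathbb M$ with at least two elements if and only if $A$ is a non-limit module of $\mathbb M$.
   Context: A binary structure over a set $W$ is a pair $\mathbb M=(V,d)$ with $d:V\times V\to W$. A module of $\mathbb M$ is a set $A\subseteq V$ such that $d(x,y)=d(x,y')$ and $d(y,x)=d(y',x)$ for all $x\in V\setminus A$ and $y,y'\in A$. A module is strong if for every module $B$, either $A\subseteq B$, $B\subseteq A$, or $A\cap B=\emptyset$. For $X\subseteq V$, $S_{\mathbb M}(X)$ is the intersection of all strong modules containing $X$. A module is robust if it is a singleton or equals $S_{\mathbb M}(\{x,y\})$ for some distinct $x,y\in V$. A module $I$ is non-limit if it is strong and contains a non-empty strong module $J\neq I$ which is maximal among the strong modules contained in $I$ and distinct from $I$. *)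

Definition set_sub {V : Type} (A B : V -> Prop) : Prop := forall v, A v -> B v.
Definition set_eq {V : Type} (A B : V -> Prop) : Prop := forall v, A v <-> B v.

Definition is_module {V W : Type} (d : V -> V -> W) (A : V -> Prop) : Prop :=
  forall x y y', ~ A x -> A y -> A y' -> d x y = d x y' /\ d y x = d y' x.

Definition strong_module {V W : Type} (d : V -> V -> W) (A : V -> Prop) : Prop :=
  is_module d A /\
  forall B, is_module d B ->
    set_sub A B \/ set_sub B A \/ (forall v, ~ (A v /\ B v)).

Definition S_M {V W : Type} (d : V -> V -> W) (X : V -> Prop) : V -> Prop :=
  fun v => forall B, strong_module d B -> set_sub X B -> B v.

Definition robust_module {V W : Type} (d : V -> V -> W) (A : V -> Prop) : Prop :=
  is_module d A /\
  ((exists x, set_eq A (fun v => v = x)) \/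
   (exists x y, x <> y /\ set_eq A (S_M d (fun v => v = x \/ v = y)))).

Definition non_limit_module {V W : Type} (d : V -> V -> W) (I : V -> Prop) : Prop :=
  strong_module d I /\
  exists J, strong_module d J /\ set_sub J I /\ ~ set_eq J I /\ (exists j, J j) /\
    (forall K, strong_module d K -> set_sub K I -> ~ set_eq K I ->
       set_sub J K -> set_eq K J).

(* A robust module I = S_M({x, y}) with x <> y is strong. Strong modules with a
   common point are nested, so the union J of the strong submodules of I that
   contain x but not y is again strong; it is maximal among the proper strong
   submodules of I, because a strong module containing both x and y contains
   S_M({x, y}) = I. Conversely, if J is a maximal proper strong submodule of a
   strong module I, pick j in J and a in I \ J: S_M({j, a}) is a strong module
   with J strictly inside it and contained in I, hence equal to I. *)

From Stdlib Require Import Classical.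

Section StrongModules.

Variables (V W : Type) (d : V -> V -> W).

Lemma strong_module_ext (A B : V -> Prop) :
  set_eq A B -> strong_module d A -> strong_module d B.
Proof.
  intros E [HA HS]. split.
  - intros x y y' Bx By By'.
    apply HA; [intro Ax; apply Bx, E, Ax | apply E, By | apply E, By'].
  - intros C HC. destruct (HS C HC) as [H|[H|H]].
    + left. intros v Bv. apply H, E, Bv.
    + right; left. intros v Cv. apply E, H, Cv.
    + right; right. intros v [Bv Cv]. apply (H v). split; [apply E, Bv | exact Cv].
Qed.

Lemma strong_sub_module (K B : V -> Prop) (z w : V) :
  strong_module d K -> is_module d B ->
  K z -> B z -> B w -> ~ K w -> set_sub K B.
Proof.
  intros [_ HK] HB Kz Bz Bw Kw.
  destruct (HK B HB) as [H|[H|H]]; [exact H | exfalso..].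
  - apply Kw, H, Bw.
  - apply (H z). split; assumption.
Qed.

Lemma strong_moduleI (A : V -> Prop) :
  is_module d A ->
  (forall B z w, is_module d B -> A z -> B z -> B w -> ~ A w -> set_sub A B) ->
  strong_module d A.
Proof.
  intros HA Hmeet. split; [exact HA|]. intros B HB.
  destruct (classic (set_sub B A)) as [BA|nBA]; [right; left; exact BA|].
  destruct (classic (exists z, A z /\ B z)) as [[z [Az Bz]]|disj].
  - left. apply not_all_ex_not in nBA as [w Hw].
    apply imply_to_and in Hw as [Bw Aw].
    exact (Hmeet B z w HB Az Bz Bw Aw).
  - right; right. intros v Hv. apply disj. exists v. exact Hv.
Qed.

Lemma singleton_strong (x : V) : strong_module d (fun v => v = x).
Proof.
  apply strong_moduleI.
  - intros u y y' _ -> ->. split; reflexivity.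
  - intros B z w _ -> Bx _ _ v ->. exact Bx.
Qed.

Lemma sub_S_M (X : V -> Prop) : set_sub X (S_M d X).
Proof. intros v Xv B _ XB. exact (XB v Xv). Qed.

Lemma S_M_sub (X C : V -> Prop) :
  strong_module d C -> set_sub X C -> set_sub (S_M d X) C.
Proof. intros sC XC v Sv. exact (Sv C sC XC). Qed.

Lemma not_S_M (X : V -> Prop) (w : V) :
  ~ S_M d X w -> exists C, strong_module d C /\ set_sub X C /\ ~ C w.
Proof.
  intros Sw. apply not_all_ex_not in Sw as [C HC].
  apply imply_to_and in HC as [sC HC]. apply imply_to_and in HC as [XC Cw].
  exists C. auto.
Qed.

Lemma S_M_strong (X : V -> Prop) : strong_module d (S_M d X).
Proof.
  apply strong_moduleI.
  - intros u y y' Su Sy Sy'.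
    destruct (not_S_M X u Su) as [C [sC [XC Cu]]].
    exact (proj1 sC u y y' Cu (Sy C sC XC) (Sy' C sC XC)).
  - intros B z w HB Sz Bz Bw Sw.
    destruct (not_S_M X w Sw) as [C [sC [XC Cw]]].
    intros v Sv.
    exact (strong_sub_module C B z w sC HB (Sz C sC XC) Bz Bw Cw v (Sv C sC XC)).
Qed.

Lemma strong_union_through (F : (V -> Prop) -> Prop) (x : V) :
  (forall K, F K -> strong_module d K) -> (forall K, F K -> K x) ->
  strong_module d (fun v => exists K, F K /\ K v).
Proof.
  intros sF xF. apply strong_moduleI.
  - intros u v v' Uu [K1 [F1 K1v]] [K2 [F2 K2v']].
    assert (K1u : ~ K1 u) by (intro h; apply Uu; exists K1; auto).
    assert (K2u : ~ K2 u) by (intro h; apply Uu; exists K2; auto).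
    destruct (proj1 (sF K1 F1) u v x K1u K1v (xF K1 F1)) as [e1 e2].
    destruct (proj1 (sF K2 F2) u x v' K2u (xF K2 F2) K2v') as [e3 e4].
    split; congruence.
  - intros B z w HB [K0 [F0 K0z]] Bz Bw Uw v [K [FK Kv]].
    assert (Bx : B x).
    { apply (strong_sub_module K0 B z w (sF K0 F0) HB K0z Bz Bw).
      - intro h. apply Uw. exists K0. auto.
      - exact (xF K0 F0). }
    apply (strong_sub_module K B x w (sF K FK) HB (xF K FK) Bx Bw); [|exact Kv].
    intro h. apply Uw. exists K. auto.
Qed.

Lemma S_M_pair_non_limit (A : V -> Prop) (x y : V) :
  x <> y -> set_eq A (S_M d (fun v => v = x \/ v = y)) -> non_limit_module d A.
Proof.
  intros nxy E.
  assert (SA : strong_module d A).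
  { apply (strong_module_ext (S_M d (fun v => v = x \/ v = y))).
    - intro v. split; apply E.
    - apply S_M_strong. }
  assert (Ax : A x) by (apply E, sub_S_M; left; reflexivity).
  assert (Ay : A y) by (apply E, sub_S_M; right; reflexivity).
  assert (A_sub : forall K, strong_module d K -> K x -> K y -> set_sub A K).
  { intros K sK Kx Ky v Av. apply (S_M_sub (fun v => v = x \/ v = y) K sK); [|apply E, Av].
    intros t [-> | ->]; assumption. }
  set (F := fun K => strong_module d K /\ K x /\ set_sub K A /\ ~ K y).
  set (J := fun v => exists K, F K /\ K v).
  assert (Fx : F (fun v => v = x)).
  { split; [apply singleton_strong|]. split; [reflexivity|].
    split; [intros v ->; exact Ax | intro h; apply nxy; symmetry; exact h]. }
  assert (Jx : J x) by (exists (fun v => v = x); split; [exact Fx | reflexivity]).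
  assert (Jy : ~ J y) by (intros [K [[_ [_ [_ Ky]]] Ky']]; contradiction).
  split; [exact SA|]. exists J.
  split; [apply (strong_union_through F x); intros K FK; apply FK|].
  split; [intros v [K [[_ [_ [KA _]]] Kv]]; exact (KA v Kv)|].
  split; [intro h; apply Jy, h, Ay|].
  split; [exists x; exact Jx|].
  intros K sK KA nK JK v. split; [intro Kv | apply JK].
  destruct (classic (K y)) as [Ky|Ky].
  - exfalso. apply nK. intro u. split; [apply KA | apply (A_sub K sK (JK x Jx) Ky)].
  - exists K. split; [|exact Kv]. exact (conj sK (conj (JK x Jx) (conj KA Ky))).
Qed.

Lemma non_limit_S_M_pair (A : V -> Prop) :
  non_limit_module d A ->
  exists x y, x <> y /\ A x /\ A y /\ set_eq A (S_M d (fun v => v = x \/ v = y)).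
Proof.
  intros [SA [J [sJ [JA [nJ [[j Jj] Jmax]]]]]].
  assert (exists a, A a /\ ~ J a) as [a [Aa Ja]].
  { apply NNPP. intro h. apply nJ. intro v. split; [apply JA|].
    intro Av. apply NNPP. intro Jv. apply h. exists v. auto. }
  set (S := S_M d (fun v => v = j \/ v = a)).
  assert (sS : strong_module d S) by apply S_M_strong.
  assert (Sj : S j) by (apply sub_S_M; left; reflexivity).
  assert (Sa : S a) by (apply sub_S_M; right; reflexivity).
  assert (SinA : set_sub S A).
  { apply (S_M_sub (fun v => v = j \/ v = a) A SA). intros t [-> | ->]; [apply JA, Jj | exact Aa]. }
  assert (JS : set_sub J S) by exact (strong_sub_module J S j a sJ (proj1 sS) Jj Sj Sa Ja).
  exists j, a. split; [intros <-; contradiction|].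
  split; [apply JA, Jj|]. split; [exact Aa|].
  destruct (classic (set_eq S A)) as [h|h].
  - intro v. split; apply h.
  - exfalso. apply Ja. exact (proj1 (Jmax S sS SinA h JS a) Sa).
Qed.

End StrongModules.

Theorem proposition6p5 (V W : Type) (d : V -> V -> W) (A : V -> Prop) :
  (robust_module d A /\ exists x y, x <> y /\ A x /\ A y) <-> non_limit_module d A.
Proof.
  split.
  - intros [[_ [[x Hx]|[x [y [nxy E]]]]] [a [b [nab [Aa Ab]]]]].
    + exfalso. apply nab. rewrite (proj1 (Hx a) Aa), (proj1 (Hx b) Ab). reflexivity.
    + exact (S_M_pair_non_limit V W d A x y nxy E).
  - intros HA.
    destruct (non_limit_S_M_pair V W d A HA) as [x [y [nxy [Ax [Ay E]]]]].
    split.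
    + split; [exact (proj1 (proj1 HA)) | right; exists x, y; auto].
    + exists x, y. auto.
Qed.
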